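(* Let $\mathbb F$ be a field of characteristic $p>0$ and let $\mathfrak g$ be a finite-dimensional restricted Lie algebra over $\mathbb F$ with $[p]$-operator $g\mapsto g^{[p]}$. Let $(\varphi,\omega)\in C^2_*(\mathfrak g)$, and suppose that $\varphi=d^1(\psi)$ for some $\psi\in C^1(\mathfrak g)$. Then $(\varphi,\mathrm{ind}^1(\psi))\in C^2_*(\mathfrak g)$ and $\mathrm{ind}^2(\varphi,\omega)=\mathrm{ind}^2(\varphi,\mathrm{ind}^1(\psi))$.
   Context: $C^1(\mathfrak g)=\mathfrak g^*$ and $C^2(\mathfrak g)=(\wedge^2\mathfrak g)^*$ (cochains with trivial coefficients $\mathbb F$); $d^1:C^1(\mathfrak g)\to C^2(\mathfrak g)$ is $d^1(\psi)(g\wedge h)=\psi([g,h])$. Given $\varphi\in C^2(\mathfrak g)$, a map $\omega:\mathfrak g\to\mathbb F$ is called $\varphi$-compatible if for all $g,h\in\mathfrak g$ and $a\in\mathbb F$: $\omega(ag)=a^p\omega(g)$ and $$\omega(g+h)=\omega(g)+\omega(h)+\sum \frac{1}{\#(g)}\varphi([g_1,g_2,g_3,\dots,g_{p-1}]\wedge g_p),$$ where the sum runs over all sequences $(g_1,\dots,g_p)$ with each $g_i\in\{g,h\}$, $g_1=g$, $g_2=h$, the bracket $[g_1,\dots,g_{p-1}]$ is the left-normed iterated bracket, and $\#(g)$ is the number of $g_i$ equal to $g$. $C^2_*(\mathfrak g)=\{(\varphi,\omega):\varphi\in C^2(\mathfrak g),\ \omega:\mathfrak g\to\mathbb F\text{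 is }\varphi\text{-compatible}\}$. For $\psi\in C^1(\mathfrak g)$, $\mathrm{ind}^1(\psi):\mathfrak g\to\mathbb F$ is $\mathrm{ind}^1(\psi)(g)=\psi(g^{[p]})$. For $(\varphi,\omega)\in C^2_*(\mathfrak g)$, $\mathrm{ind}^2(\varphi,\omega):\mathfrak g\times\mathfrak g\to\mathbb F$ is $\mathrm{ind}^2(\varphi,\omega)(g,h)=\varphi(g\wedge h^{[p]})-\varphi([g,h,\dots,h]\wedge h)$, where in the left-normed bracket $[g,h,\dots,h]$ the element $h$ appears $p-1$ times. *)

From HB Require Import structures.
From mathcomp Require Import all_boot all_order all_algebra.
Set Implicit Arguments. Unset Strict Implicit. Unset Printing Implicit Defensive.
Import GRing.Theory.
Local Open Scope ring_scope.

Section RestrictedLie.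
Variables (F : fieldType) (L : lmodType F).

Definition is_lie_bracket (br : L -> L -> L) : Prop :=
  [/\ (forall a x y z, br (a *: x + y) z = a *: br x z + br y z),
      (forall a x y z, br z (a *: x + y) = a *: br z x + br z y),
      (forall x, br x x = 0) &
      (forall x y z, br x (br y z) + br y (br z x) + br z (br x y) = 0)].

Definition lnbr (br : L -> L -> L) (s : seq L) : L :=
  foldl br (head 0 s) (behead s).

Definition gh_seq (g h : L) (k : nat) (b : k.-tuple bool) : seq L :=
  g :: h :: map (fun x : bool => if x then g else h) b.

(* #(g) : number of entries equal to g (as a position count: g1 plus the true b_i) *)
Definition nb_g (k : nat) (b : k.-tuple bool) : nat := (count id b).+1.

(* Jacobson's axioms for the [p]-operator pm, with the sum of the s_i written as
   sum over sequences (g1,...,gp), g1 = g, g2 = h, of (1/#(g)) [g1,...,gp]. *)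
Definition is_p_map (p : nat) (br : L -> L -> L) (pm : L -> L) : Prop :=
  [/\ (forall (a : F) x, pm (a *: x) = a ^+ p *: pm x),
      (forall x y, br (pm x) y = iter p (br x) y) &
      (forall g h, pm (g + h) = pm g + pm h +
         \sum_(b : (p - 2).-tuple bool)
            (nb_g b)%:R^-1 *: lnbr br (gh_seq g h b))].

Definition is_restricted_lie (p : nat) (br : L -> L -> L) (pm : L -> L) : Prop :=
  is_lie_bracket br /\ is_p_map p br pm.

Definition is_cochain1 (psi : L -> F) : Prop :=
  forall a x y, psi (a *: x + y) = a * psi x + psi y.

(* C^2 = (wedge^2 g)^* : alternating bilinear forms, phi g h = phi(g /\ h) *)
Definition is_cochain2 (phi : L -> L -> F) : Prop :=
  [/\ (forall a x y z, phi (a *: x + y) z = a * phi x z + phi y z),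
      (forall a x y z, phi z (a *: x + y) = a * phi z x + phi z y) &
      (forall x, phi x x = 0)].

Definition d1 (br : L -> L -> L) (psi : L -> F) : L -> L -> F :=
  fun g h => psi (br g h).

Definition compatible (p : nat) (br : L -> L -> L) (phi : L -> L -> F)
    (omega : L -> F) : Prop :=
  (forall (a : F) g, omega (a *: g) = a ^+ p * omega g) /\
  (forall g h, omega (g + h) = omega g + omega h +
     \sum_(b : (p - 2).-tuple bool)
        (nb_g b)%:R^-1 * phi (lnbr br (take p.-1 (gh_seq g h b)))
                             (last g (gh_seq g h b))).

Definition in_C2star (p : nat) (br : L -> L -> L) (phi : L -> L -> F)
    (omega : L -> F) : Prop :=
  is_cochain2 phi /\ compatible p br phi omega.

Definition ind1 (pm : L -> L) (psi : L -> F) : L -> F := fun g => psi (pm g).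

Definition ind2 (p : nat) (br : L -> L -> L) (pm : L -> L)
    (phi : L -> L -> F) (omega : L -> F) : L -> L -> F :=
  fun g h => phi g (pm h) - phi (iter p.-1 (fun z => br z h) g) h.

End RestrictedLie.

(* Applying the linear form psi to Jacobson's formula for (g + h)^[p] turns each
   Lie word [g1, ..., gp] into psi [[g1, ..., g(p-1)], gp] = (d1 psi)([g1, ..., g(p-1)] /\ gp),
   which is exactly the compatibility condition for psi o [p]. The equality of the
   ind^2 values holds because ind^2(phi, omega) does not involve omega. *)
From mathcomp Require Import all_boot all_order all_algebra.
Local Open Scope ring_scope.
Import GRing.Theory.

Set Implicit Arguments.
Unset Strict Implicit.
Unset Printing Implicit Defensive.

Lemma foldl_take_last (T : Type) (f : T -> T -> T) (n : nat) (x : T) (s : seq T) :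
  size s = n.+1 -> f (foldl f x (take n s)) (last x s) = foldl f x s.
Proof.
case/lastP: s => [//|s y]; rewrite size_rcons => -[size_s].
by rewrite last_rcons foldl_rcons -cats1 -size_s take_size_cat.
Qed.

Section Cochain1.
Variables (F : fieldType) (L : lmodType F) (psi : L -> F).
Hypothesis psi_lin : is_cochain1 psi.

Lemma cochain1_0 : psi 0 = 0.
Proof.
have := psi_lin 1 0 0; rewrite scale1r addr0 mul1r => /esym.
by rewrite -[in RHS](addr0 (psi 0)) => /addrI.
Qed.

Lemma cochain1D x y : psi (x + y) = psi x + psi y.
Proof. by rewrite -[x in LHS]scale1r psi_lin mul1r. Qed.

Lemma cochain1Z a x : psi (a *: x) = a * psi x.
Proof. by rewrite -[_ *: _]addr0 psi_lin cochain1_0 addr0. Qed.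

Lemma cochain1_sum (I : finType) (f : I -> L) :
  psi (\sum_i f i) = \sum_i psi (f i).
Proof. exact: (big_morph psi cochain1D cochain1_0). Qed.

End Cochain1.

Section Compatibility.
Variables (F : fieldType) (L : lmodType F) (br : L -> L -> L).

Lemma lnbr_gh_seq_take_last (g h : L) (k : nat) (b : k.-tuple bool) :
  br (lnbr br (take k.+1 (gh_seq g h b))) (last g (gh_seq g h b))
  = lnbr br (gh_seq g h b).
Proof.
rewrite /lnbr /gh_seq /= (@foldl_take_last _ br k g) //.
by rewrite /= size_map size_tuple.
Qed.

Lemma ind1_compatible (p : nat) (pm : L -> L) (psi : L -> F) :
  (1 < p)%N -> is_p_map p br pm -> is_cochain1 psi ->
  compatible p br (d1 br psi) (ind1 pm psi).
Proof.
move=> p_gt1 [pmZ _ pmD] psi_lin; split=> [a g | g h].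
  by rewrite /ind1 pmZ cochain1Z.
rewrite /ind1 pmD !(cochain1D psi_lin) cochain1_sum //; congr (_ + _).
apply: eq_bigr => b _; rewrite cochain1Z // /d1.
have -> : p.-1 = (p - 2).+1 by rewrite subnSK // subn1.
by rewrite lnbr_gh_seq_take_last.
Qed.

End Compatibility.

Theorem lemma2p1 (F : fieldType) (p : nat) (hp : p \in [pchar F])
    (L : vectType F) (br : L -> L -> L) (pm : L -> L)
    (HL : is_restricted_lie p br pm)
    (phi : L -> L -> F) (omega : L -> F) (Hstar : in_C2star p br phi omega)
    (psi : L -> F) (Hpsi : is_cochain1 psi) (Hd : phi = d1 br psi) :
  in_C2star p br phi (ind1 pm psi) /\
  (forall g h, ind2 p br pm phi omega g h = ind2 p br pm phi (ind1 pm psi) g h).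
Proof.
split=> //; case: Hstar => phi_cochain _; split=> //.
have p_gt1 : (1 < p)%N by exact/prime_gt1/(GRing.pcharf_prime hp).
by rewrite Hd; apply: ind1_compatible => //; case: HL.
Qed.
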